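(* Fix any $\alpha\in(0,0.5)$, let $T\ge 16^{1/\alpha}$, and fix any $\delta\le 0.24$. There exists a (finite) hypothesis class $\mathcal{H}$ containing the two constant classifiers $\mathbf{+1}$ and $\mathbf{-1}$ such that any online learning algorithm satisfying $T^{-\alpha}$-EFP($\delta$) fairness has expected regret $\Omega(T^{2\alpha})$ with respect to the set of $0$-EFP fair policies (i.e., for any such algorithm there is a data distribution on which its expected regret with respect to the best $0$-EFP policy is at least $cT^{2\alpha}$ for a universal constant $c>0$).
   Context: Examples are triples $(\hat x,a,y)\in\mathcal{X}\times\{-1,1\}\times\{-1,1\}$ drawn i.i.d. from a distribution $\mathcal{D}$; $x=(\hat x,a)$; hypotheses map $x$ to $\{-1,1\}$; $\Delta(\mathcal{H})$ is the set of distributions over $\mathcal{H}$. $FPR_j(\pi)=\mathbb{E}_{h\sim\pi}[\Pr_{\mathcal{D}}(h(x)=+1\mid a=j,y=-1)]$, $\Delta_{FPR}(\pi)=FPR_1(\pi)-FPR_{-1}(\pi)$, and $\pi$ satisfies $\gamma$-EFP if $|\Delta_{FPR}(\pi)|\le\gamma$. Online protocol: each round $t=1..T$ the learner chooses $\pi_t\in\Delta(\mathcal{H})$, $(x_t,y_t)\sim\mathcal{D}$ is drawn and $x_t$ observed, the learner predicts $\hat y_t=h_t(x_t)$ with $h_t\sim\pi_t$, and observes $y_t$ only if $\hat y_t=+1$. Loss is $0$-$1$. Regret with respect to a class $\mathcal{P}$ is the expected cumulative loss of the learner minus $T$ times the expected loss of the best policy in $\mathcal{P}$. An algorithm satisfies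 $\gamma$-EFP($\delta$) if, with probability at least $1-\delta$ over the examples, every $\pi_t$ satisfies $\gamma$-EFP with respect to the true distribution $\mathcal{D}$ (for whichever distribution it is run on). *)

From HB Require Import structures.
From mathcomp Require Import all_boot all_order all_algebra.
From mathcomp Require Import reals exp.
Set Implicit Arguments. Unset Strict Implicit. Unset Printing Implicit Defensive.
Import Order.TTheory GRing.Theory Num.Theory.
Local Open Scope ring_scope.

(* Conventions: labels and group attributes in {-1,1} are encoded as bool,
   true = +1, false = -1.  An example (xhat, a, y) is ((xhat, a), y) : Ex Xh,
   so that z.1 = x = (xhat, a), z.1.2 = a, z.2 = y. *)

Definition Ex (Xh : finType) : finType := ((Xh * bool) * bool)%type.

Definition is_fdist (R : realType) (T : finType) (p : {ffun T -> R}) : Prop :=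
  (forall t, 0 <= p t) /\ \sum_(t : T) p t = 1.

Definition efp_nondegenerate (R : realType) (Xh : finType) (D : {ffun Ex Xh -> R}) : Prop :=
  forall j : bool, 0 < \sum_(z : Ex Xh | (z.1.2 == j) && ~~ z.2) D z.

Definition FPR (R : realType) (Xh H : finType) (hyp : H -> Xh * bool -> bool)
  (D : {ffun Ex Xh -> R}) (pi : {ffun H -> R}) (j : bool) : R :=
  \sum_(i : H) pi i *
    ((\sum_(z : Ex Xh | [&& z.1.2 == j, ~~ z.2 & hyp i z.1]) D z) /
     (\sum_(z : Ex Xh | (z.1.2 == j) && ~~ z.2) D z)).

Definition DeltaFPR (R : realType) (Xh H : finType) (hyp : H -> Xh * bool -> bool)
  (D : {ffun Ex Xh -> R}) (pi : {ffun H -> R}) : R :=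
  FPR hyp D pi true - FPR hyp D pi false.

Definition EFP (R : realType) (Xh H : finType) (hyp : H -> Xh * bool -> bool)
  (D : {ffun Ex Xh -> R}) (gamma : R) (pi : {ffun H -> R}) : bool :=
  `|DeltaFPR hyp D pi| <= gamma.

Definition pol_loss (R : realType) (Xh H : finType) (hyp : H -> Xh * bool -> bool)
  (D : {ffun Ex Xh -> R}) (pi : {ffun H -> R}) : R :=
  \sum_(i : H) pi i * \sum_(z : Ex Xh | hyp i z.1 != z.2) D z.

(* What the learner sees in a round: x_t, the hypothesis h_t it drew,
   and y_t only if its prediction h_t(x_t) was +1. *)
Definition Obs (Xh H : finType) : Type := ((Xh * bool) * H * option bool)%type.

Definition Learner (R : realType) (Xh H : finType) : Type :=
  seq (Obs Xh H) -> {ffun H -> R}.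

Definition valid_learner (R : realType) (Xh H : finType) (L : Learner R Xh H) : Prop :=
  forall hist, is_fdist (L hist).

Definition Run (Xh H : finType) (T : nat) : finType := {ffun 'I_T -> (Ex Xh * H)%type}.

Definition obs_of (Xh H : finType) (hyp : H -> Xh * bool -> bool)
  (e : (Ex Xh * H)%type) : Obs Xh H :=
  (e.1.1, e.2, if hyp e.2 e.1.1 then Some e.1.2 else None).

Definition history (Xh H : finType) (hyp : H -> Xh * bool -> bool) (T : nat)
  (w : Run Xh H T) (t : nat) : seq (Obs Xh H) :=
  [seq obs_of hyp (w i) | i : 'I_T <- [seq i <- enum 'I_T | (nat_of_ord i < t)%N]].

Definition pol_at (R : realType) (Xh H : finType) (hyp : H -> Xh * bool -> bool)
  (L : Learner R Xh H) (T : nat) (w : Run Xh H T) (t : 'I_T) : {ffun H -> R} :=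
  L (history hyp w t).

Definition run_prob (R : realType) (Xh H : finType) (hyp : H -> Xh * bool -> bool)
  (D : {ffun Ex Xh -> R}) (L : Learner R Xh H) (T : nat) (w : Run Xh H T) : R :=
  \prod_(t < T) (D (w t).1 * pol_at hyp L w t (w t).2).

Definition learner_loss (R : realType) (Xh H : finType) (hyp : H -> Xh * bool -> bool)
  (D : {ffun Ex Xh -> R}) (L : Learner R Xh H) (T : nat) : R :=
  \sum_(w : Run Xh H T) run_prob hyp D L w *
     (\sum_(t < T) (hyp (w t).2 (w t).1.1 != (w t).1.2))%:R.

Definition prob_all_fair (R : realType) (Xh H : finType) (hyp : H -> Xh * bool -> bool)
  (D : {ffun Ex Xh -> R}) (L : Learner R Xh H) (T : nat) (gamma : R) : R :=
  \sum_(w : Run Xh H T) run_prob hyp D L w *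
     ([forall t : 'I_T, EFP hyp D gamma (pol_at hyp L w t)])%:R.

Definition EFP_delta (R : realType) (Xh H : finType) (hyp : H -> Xh * bool -> bool)
  (L : Learner R Xh H) (T : nat) (gamma delta : R) : Prop :=
  forall D : {ffun Ex Xh -> R}, is_fdist D -> efp_nondegenerate D ->
    1 - delta <= prob_all_fair hyp D L T gamma.

(* With Xh = bool, take the score classifier x |-> xhat together with the two
   constants.  The distributions [twin_dist p true] and [twin_dist p false]
   differ only in the label of the rare points xhat = a = +1, of mass p.  Under
   the first the score classifier is perfect and 0-EFP; under the second its FPR
   gap is 1/2, so a T^-alpha-EFP learner must, with probability >= 1 - delta,
   give it weight <= 2 T^-alpha <= 1/8 in every round.  For p = 1/(100 T) a run
   avoids the rare points with probability >= 99/100, and such runs are equally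
   likely under both distributions.  So under [twin_dist p true], with
   probability >= 3/4, every round costs the learner an expected loss >= 7/16,
   whereas the best 0-EFP policy costs 0: the regret is >= 21 T / 64, which
   exceeds T^(2 alpha) / 4. *)

From HB Require Import structures.
From mathcomp Require Import all_boot all_order all_algebra.
From mathcomp Require Import reals exp.
From mathcomp Require Import ring lra.
Set Implicit Arguments. Unset Strict Implicit. Unset Printing Implicit Defensive.
Import Order.TTheory GRing.Theory Num.Theory.
Local Open Scope ring_scope.

Definition ffun_cons (X : Type) (n : nat) (x : X) (w : {ffun 'I_n -> X}) :
  {ffun 'I_n.+1 -> X} :=
  [ffun i => if unlift ord0 i is Some j then w j else x].

Lemma ffun_cons0 (X : Type) n (x : X) (w : {ffun 'I_n -> X}) :
  ffun_cons x w ord0 = x.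
Proof. by rewrite ffunE unlift_none. Qed.

Lemma ffun_cons_lift (X : Type) n (x : X) (w : {ffun 'I_n -> X}) (j : 'I_n) :
  ffun_cons x w (lift ord0 j) = w j.
Proof. by rewrite ffunE liftK. Qed.

Lemma big_ffunS (R : Type) (idx : R) (op : Monoid.com_law idx) (X : finType) n
    (F : {ffun 'I_n.+1 -> X} -> R) :
  \big[op/idx]_(w : {ffun 'I_n.+1 -> X}) F w =
  \big[op/idx]_(x : X) \big[op/idx]_(w : {ffun 'I_n -> X}) F (ffun_cons x w).
Proof.
rewrite pair_big /=.
pose uncons (w : {ffun 'I_n.+1 -> X}) := (w ord0, [ffun j => w (lift ord0 j)]).
have consK : cancel (fun p => ffun_cons p.1 p.2) uncons.
  by move=> [x w]; rewrite /uncons ffun_cons0; congr pair; apply/ffunP => j;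
    rewrite ffunE ffun_cons_lift.
have unconsK : cancel uncons (fun p => ffun_cons p.1 p.2).
  move=> w; apply/ffunP => i; rewrite ffunE.
  by case: unliftP => [j ->|->]; rewrite ?ffunE.
exact: (reindex (fun p => ffun_cons p.1 p.2)) (onW_bij _ (Bijective consK unconsK)).
Qed.

Lemma bernoulli_ineq (R : realFieldType) (p : R) (n : nat) :
  0 <= p <= 1 -> 1 - n%:R * p <= (1 - p) ^+ n.
Proof.
move=> /andP[p0 p1]; elim: n => [|n IH]; first by rewrite expr0 mul0r subr0.
have : 0 <= (1 - p) ^+ n by apply: exprn_ge0; lra.
have : 0 <= n%:R * p * p by rewrite mulr_ge0 ?mulr_ge0.
by rewrite exprS -natr1; nra.
Qed.

Lemma sum_weight_andb (R : realFieldType) (I : finType) (P : I -> R)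
    (a b : pred I) :
  (forall i, 0 <= P i) ->
  \sum_i P i * (a i)%:R + \sum_i P i * (b i)%:R - \sum_i P i <=
  \sum_i P i * (a i && b i)%:R.
Proof.
move=> P0; rewrite -big_split -sumrB; apply: ler_sum => i _.
by have := P0 i; case: (a i); case: (b i) => /=; lra.
Qed.

Lemma prod_natb (R : comPzSemiRingType) (I : finType) (b : pred I) :
  \prod_(i : I) ((b i)%:R : R) = ([forall i, b i])%:R.
Proof.
case: (boolP [forall i, b i]) => [/forallP bT|/forallPn[i nbi]].
  by rewrite big1 // => i _; rewrite bT.
by rewrite (bigD1 i) //= (negbTE nbi) mul0r.
Qed.

Lemma sum_pair_marginal (R : comNzRingType) (I J : finType)
    (a : I -> R) (b : J -> R) (f : I -> R) :
  \sum_(j : J) b j = 1 ->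
  \sum_(p : I * J) a p.1 * b p.2 * f p.1 = \sum_(i : I) a i * f i.
Proof.
move=> b1; rewrite -(pair_bigA _ (fun i j => a i * b j * f i)).
apply: eq_bigr => i _ /=.
by rewrite -[RHS]mul1r -b1 !mulr_suml; apply: eq_bigr => j _; ring.
Qed.

Lemma sum_option (R : nmodType) (T : finType) (F : option T -> R) :
  \sum_(i : option T) F i = F None + \sum_(t : T) F (Some t).
Proof.
rewrite (bigD1 None) //=; congr (_ + _).
rewrite (reindex_omap Some id) //=; last by case.
by apply: eq_bigl => t; rewrite eqxx.
Qed.

Lemma sum_Ex_bool (R : nmodType) (P : pred (Ex bool)) (F : Ex bool -> R) :
  \sum_(z : Ex bool | P z) F z =
  \sum_(xh : bool) \sum_(a : bool) \sum_(y : bool)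
    (if P ((xh, a), y) then F ((xh, a), y) else 0).
Proof.
rewrite big_mkcond pair_bigA.
rewrite (pair_bigA _ (fun p y => if P (p.1, p.2, y) then F (p.1, p.2, y) else 0)) /=.
by apply: eq_bigr => -[[]].
Qed.

Lemma dirac_fdist (R : realType) (T : finType) (t0 : T) :
  is_fdist [ffun t => ((t == t0)%:R : R)].
Proof.
split=> [t|]; first by rewrite ffunE ler0n.
by rewrite (bigD1 t0) //= big1 => [|t /negbTE tt0]; rewrite ffunE ?eqxx ?tt0 ?addr0.
Qed.

Lemma powRN_horizon (R : realType) (alpha x : R) :
  0 < alpha -> 16 `^ (1 / alpha) <= x -> x `^ (- alpha) <= 1 / 16.
Proof.
move=> alpha_gt0 x_ge.
have x_gt0 : 0 < x by apply: lt_le_trans x_ge; apply: powR_gt0.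
have : 16 <= x `^ alpha.
  have -> : 16 = (16 `^ (1 / alpha)) `^ alpha :> R.
    by rewrite -powRrM mul1r mulVf ?powRr1 //; lra.
  by apply: ge0_ler_powR; rewrite ?nnegrE ?powR_ge0 //; lra.
by rewrite powRN div1r => ?; rewrite lef_pV2 ?posrE ?powR_gt0 //; lra.
Qed.

Section Runs.
Variables (R : realType) (Xh H : finType) (hyp : H -> Xh * bool -> bool).

(* Conditioned on its first round being o, a run of L is a run of
   [learner_after L o] on the remaining rounds. *)
Definition learner_after (L : Learner R Xh H) (o : Obs Xh H) : Learner R Xh H :=
  fun hist => L (o :: hist).

Lemma history0 T (w : Run Xh H T) : history hyp w 0 = [::].
Proof. by rewrite /history (eq_filter (a2 := pred0)) ?filter_pred0. Qed.

Lemma history_cons T (e : Ex Xh * H) (w : Run Xh H T) (t : nat) :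
  history hyp (ffun_cons e w) t.+1 = obs_of hyp e :: history hyp w t.
Proof.
rewrite /history enum_ordSl /= ffun_cons0 filter_map -map_comp.
by congr (_ :: _); apply: eq_map => j /=; rewrite ffun_cons_lift.
Qed.

Lemma pol_at_cons0 (L : Learner R Xh H) T (e : Ex Xh * H) (w : Run Xh H T) :
  pol_at hyp L (ffun_cons e w) ord0 = L [::].
Proof. by rewrite /pol_at history0. Qed.

Lemma pol_at_cons_lift (L : Learner R Xh H) T (e : Ex Xh * H) (w : Run Xh H T)
    (j : 'I_T) :
  pol_at hyp L (ffun_cons e w) (lift ord0 j) =
  pol_at hyp (learner_after L (obs_of hyp e)) w j.
Proof. by rewrite /pol_at lift0 history_cons. Qed.

Lemma run_prob_cons (D : {ffun Ex Xh -> R}) (L : Learner R Xh H) T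
    (e : Ex Xh * H) (w : Run Xh H T) :
  run_prob hyp D L (ffun_cons e w) =
  D e.1 * L [::] e.2 * run_prob hyp D (learner_after L (obs_of hyp e)) w.
Proof.
rewrite /run_prob big_ord_recl pol_at_cons0 ffun_cons0.
by congr (_ * _); apply: eq_bigr => j _; rewrite pol_at_cons_lift ffun_cons_lift.
Qed.

Lemma sum_run_cons (D : {ffun Ex Xh -> R}) (L : Learner R Xh H) T
    (G : Run Xh H T.+1 -> R) :
  \sum_(w : Run Xh H T.+1) run_prob hyp D L w * G w =
  \sum_(e : Ex Xh * H) D e.1 * L [::] e.2 *
    \sum_(w : Run Xh H T)
      run_prob hyp D (learner_after L (obs_of hyp e)) w * G (ffun_cons e w).
Proof.
rewrite big_ffunS; apply: eq_bigr => e _; rewrite mulr_sumr.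
by apply: eq_bigr => w _; rewrite run_prob_cons mulrA.
Qed.

Lemma valid_learner_after (L : Learner R Xh H) (o : Obs Xh H) :
  valid_learner L -> valid_learner (learner_after L o).
Proof. by move=> vL hist; apply: vL. Qed.

Lemma run_prob_eq (D D' : {ffun Ex Xh -> R}) (L : Learner R Xh H) T
    (w : Run Xh H T) :
  (forall t, D (w t).1 = D' (w t).1) -> run_prob hyp D L w = run_prob hyp D' L w.
Proof. by move=> DD'; apply: eq_bigr => t _; rewrite DD'. Qed.

Variable D : {ffun Ex Xh -> R}.

Lemma sum_run_prob_prod T (L : Learner R Xh H) (f : Ex Xh -> R) :
  valid_learner L ->
  \sum_(w : Run Xh H T) run_prob hyp D L w * \prod_(t < T) f (w t).1 =
  (\sum_(e : Ex Xh) D e * f e) ^+ T.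
Proof.
elim: T L => [|T IH] L vL.
  rewrite (eq_bigr (fun=> 1)) => [|w _]; last by rewrite /run_prob !big_ord0 mulr1.
  by rewrite sumr_const card_ffun card_ord expn0.
rewrite sum_run_cons exprS.
under eq_bigr => e _.
  under eq_bigr => w _ do rewrite big_ord_recl ffun_cons0 mulrCA.
  rewrite -mulr_sumr.
  under eq_bigr => w _ do under eq_bigr => t _ do rewrite ffun_cons_lift.
  rewrite IH; last exact: valid_learner_after.
  over.
have [_ L1] := vL [::].
rewrite -(sum_pair_marginal D f L1) mulr_suml.
by apply: eq_bigr => e _; rewrite mulrA.
Qed.

Hypothesis D_fdist : is_fdist D.

Lemma run_prob_ge0 (L : Learner R Xh H) T (w : Run Xh H T) :
  valid_learner L -> 0 <= run_prob hyp D L w.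
Proof.
have [D_ge0 _] := D_fdist; move=> vL; apply: prodr_ge0 => t _.
by have [pi_ge0 _] := vL (history hyp w t); rewrite mulr_ge0.
Qed.

Lemma pol_loss_ge0 (pi : {ffun H -> R}) : is_fdist pi -> 0 <= pol_loss hyp D pi.
Proof.
have [D_ge0 _] := D_fdist; move=> [pi_ge0 _].
by apply: sumr_ge0 => i _; rewrite mulr_ge0 ?sumr_ge0.
Qed.

Lemma sum_run_prob T (L : Learner R Xh H) :
  valid_learner L -> \sum_(w : Run Xh H T) run_prob hyp D L w = 1.
Proof.
move=> vL; have := sum_run_prob_prod T (fun=> 1) vL.
rewrite (eq_bigr (fun e => D e)) => [|e _]; last exact: mulr1.
have [_ ->] := D_fdist; rewrite expr1n => <-.
by apply: eq_bigr => w _; rewrite big1 ?mulr1.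
Qed.

Lemma sum_fdist_pair (pi : {ffun H -> R}) :
  is_fdist pi -> \sum_(e : Ex Xh * H) D e.1 * pi e.2 = 1.
Proof.
move=> [_ pi1]; have [_ D1] := D_fdist.
rewrite -(pair_bigA _ (fun e h => D e * pi h)) -[RHS]D1 /=.
by apply: eq_bigr => e _; rewrite -mulr_sumr pi1 mulr1.
Qed.

Lemma expect_round T (L : Learner R Xh H) (t : 'I_T) (phi : Ex Xh * H -> R) :
  valid_learner L ->
  \sum_(w : Run Xh H T) run_prob hyp D L w * phi (w t) =
  \sum_(w : Run Xh H T) run_prob hyp D L w *
    \sum_(e : Ex Xh * H) D e.1 * pol_at hyp L w t e.2 * phi e.
Proof.
elim: T L t => [|T IH] L t vL; first by case: t.
rewrite !sum_run_cons.
have mass e : \sum_(w : Run Xh H T)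
    run_prob hyp D (learner_after L (obs_of hyp e)) w = 1.
  exact/sum_run_prob/valid_learner_after.
case: (unliftP ord0 t) => [j ->|->].
  apply: eq_bigr => e _; congr (_ * _).
  under eq_bigr do rewrite ffun_cons_lift.
  rewrite IH; last exact: valid_learner_after.
  by under [RHS]eq_bigr do rewrite pol_at_cons_lift.
under eq_bigr => e _ do under eq_bigr do rewrite ffun_cons0.
under eq_bigr do rewrite -mulr_suml mass mul1r.
under [RHS]eq_bigr => e _ do under eq_bigr do rewrite pol_at_cons0.
under [RHS]eq_bigr do rewrite -mulr_suml mass mul1r.
by rewrite -mulr_suml sum_fdist_pair ?mul1r.
Qed.

Lemma learner_loss_rounds T (L : Learner R Xh H) :
  valid_learner L ->
  learner_loss hyp D L T =
  \sum_(t < T) \sum_(w : Run Xh H T)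
    run_prob hyp D L w * pol_loss hyp D (pol_at hyp L w t).
Proof.
move=> vL; rewrite /learner_loss.
under eq_bigr do rewrite natr_sum mulr_sumr.
rewrite exchange_big; apply: eq_bigr => t _.
rewrite (expect_round t (fun e => (hyp e.2 e.1.1 != e.1.2)%:R) vL).
apply: eq_bigr => w _; congr (_ * _); rewrite /pol_loss.
rewrite -(pair_bigA _ (fun z i => D z * pol_at hyp L w t i * (hyp i z.1 != z.2)%:R)).
rewrite exchange_big /=; apply: eq_bigr => i _.
rewrite [in RHS]big_mkcond mulr_sumr; apply: eq_bigr => z _ /=.
by case: ifP; rewrite ?mulr1 ?mulr0 // mulrC.
Qed.

End Runs.

Definition score_or_const (i : option bool) (x : bool * bool) : bool :=
  if i is Some b then b else x.1.

Definition rare (z : Ex bool) : bool := z.1.1 && z.1.2.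

Section TwinDistributions.
Variables (R : realType) (p : R).

Definition twin_dist (yr : bool) : {ffun Ex bool -> R} :=
  [ffun z => match z with
             | ((true, true), y) => if y == yr then p else 0
             | ((false, true), false) => p
             | ((false, false), false) => 1 / 2 - p
             | ((true, false), true) => 1 / 2 - p
             | _ => 0
             end].

Ltac expand_twin := rewrite !sum_Ex_bool !big_bool /= !ffunE /=.

Lemma twin_dist_off_rare (z : Ex bool) :
  ~~ rare z -> twin_dist true z = twin_dist false z.
Proof. by case: z => [[[] []] []]; rewrite //= !ffunE. Qed.

Lemma pol_loss_twin_true (pi : {ffun option bool -> R}) :
  pol_loss score_or_const (twin_dist true) pi =
  (pi (Some true) + pi (Some false)) / 2.
Proof. rewrite /pol_loss sum_option big_bool /=; expand_twin; ring. Qed.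

Lemma twin_false_no_rare :
  \sum_(z : Ex bool) twin_dist false z * (~~ rare z)%:R = 1 - p.
Proof. expand_twin; lra. Qed.

Lemma twin_dist_fdist yr : 0 <= p <= 1 / 2 -> is_fdist (twin_dist yr).
Proof.
move=> /andP[p_ge0 p_le_half].
split; first by case=> [[[] []] []]; rewrite ffunE //=; case: yr => /=; lra.
by expand_twin; case: yr => /=; lra.
Qed.

Lemma twin_dist_nondegenerate yr :
  0 < p < 1 / 2 -> efp_nondegenerate (twin_dist yr).
Proof. by move=> /andP[p_gt0 p_lt_half] []; expand_twin; case: yr => /=; lra. Qed.

Lemma DeltaFPR_twin yr (pi : {ffun option bool -> R}) :
  0 < p < 1 / 2 ->
  DeltaFPR score_or_const (twin_dist yr) pi = (~~ yr)%:R * pi None / 2.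
Proof.
move=> /andP[p_gt0 p_lt_half].
rewrite /DeltaFPR /FPR !sum_option !big_bool /=.
by expand_twin; case: yr => /=; field; lra.
Qed.

End TwinDistributions.

Lemma pol_loss_twin_of_EFP (R : realType) (p gamma : R)
    (pi : {ffun option bool -> R}) :
  0 < p < 1 / 2 -> gamma <= 1 / 16 -> is_fdist pi ->
  EFP score_or_const (twin_dist p false) gamma pi ->
  7 / 16 <= pol_loss score_or_const (twin_dist p true) pi.
Proof.
move=> p_bd gamma_le [pi_ge0 pi1]; rewrite /EFP DeltaFPR_twin //= mul1r => fair.
have := ler_norm (pi None / 2); have := pi_ge0 None.
move: pi1; rewrite pol_loss_twin_true sum_option big_bool /=; lra.
Qed.

Section TwinLearner.
Variables (R : realType) (T : nat) (p : R) (L : Learner R bool (option bool)).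
Hypotheses (p_bd : 0 < p < 1 / 2) (vL : valid_learner L).

Let twin_fdist yr : is_fdist (twin_dist p yr).
Proof. by apply: twin_dist_fdist; case/andP: p_bd => *; apply/andP; split; lra. Qed.

Definition rare_free (w : Run bool (option bool) T) : bool :=
  [forall t, ~~ rare (w t).1].

Definition fair_run (gamma : R) (w : Run bool (option bool) T) : bool :=
  [forall t,
     EFP score_or_const (twin_dist p false) gamma (pol_at score_or_const L w t)].

Lemma prob_rare_free :
  1 - T%:R * p <=
  \sum_w run_prob score_or_const (twin_dist p false) L w * (rare_free w)%:R.
Proof.
have := sum_run_prob_prod score_or_const (twin_dist p false) T
  (fun z => (~~ rare z)%:R) vL.
rewrite twin_false_no_rare => mass_rare_free.
apply: le_trans (_ : (1 - p) ^+ T <= _).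
  by apply: bernoulli_ineq; case/andP: p_bd => *; lra.
by rewrite -mass_rare_free; under eq_bigr do rewrite prod_natb.
Qed.

Lemma twin_runs_agree_off_rare (E : pred (Run bool (option bool) T)) :
  \sum_w run_prob score_or_const (twin_dist p true) L w * (rare_free w && E w)%:R =
  \sum_w run_prob score_or_const (twin_dist p false) L w * (rare_free w && E w)%:R.
Proof.
apply: eq_bigr => w _; case: (boolP (rare_free w)) => [/forallP rfw|]; last first.
  by rewrite !mulr0.
rewrite (run_prob_eq _ _ (D' := twin_dist p false)) // => t.
exact: twin_dist_off_rare.
Qed.

Lemma prob_fair_rare_free (gamma delta : R) :
  T%:R * p <= 1 / 100 -> delta <= 24 / 100 ->
  EFP_delta score_or_const L T gamma delta ->
  3 / 4 <= \sum_w run_prob score_or_const (twin_dist p true) L w *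
                 (rare_free w && fair_run gamma w)%:R.
Proof.
move=> Tp delta_le fairL.
have PF := fairL _ (twin_fdist false) (twin_dist_nondegenerate _ p_bd).
have PA := prob_rare_free.
have := sum_weight_andb rare_free (fair_run gamma)
  (fun w => run_prob_ge0 score_or_const (twin_fdist false) w vL).
rewrite (sum_run_prob _ (twin_fdist false)) // twin_runs_agree_off_rare.
by rewrite /prob_all_fair in PF; lra.
Qed.

Lemma twin_loss_lower_bound (gamma delta : R) :
  T%:R * p <= 1 / 100 -> gamma <= 1 / 16 -> delta <= 24 / 100 ->
  EFP_delta score_or_const L T gamma delta ->
  21 / 64 * T%:R <= learner_loss score_or_const (twin_dist p true) L T.
Proof.
move=> Tp gamma_le delta_le fairL.
have PAF := prob_fair_rare_free Tp delta_le fairL.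
have round (t : 'I_T) : 21 / 64 <=
    \sum_(w : Run bool (option bool) T) run_prob score_or_const (twin_dist p true) L w *
      pol_loss score_or_const (twin_dist p true) (pol_at score_or_const L w t).
  apply: le_trans (_ : 7 / 16 * \sum_w run_prob score_or_const (twin_dist p true) L w *
                         (rare_free w && fair_run gamma w)%:R <= _); first lra.
  rewrite mulr_sumr; apply: ler_sum => w _; rewrite mulrCA.
  apply: ler_wpM2l; first exact: (run_prob_ge0 score_or_const (twin_fdist true) _ vL).
  have pi_fdist := vL (history score_or_const w t).
  case: (boolP (fair_run gamma w)) => [/forallP fair|_]; last first.
    rewrite andbF mulr0.
    exact: (pol_loss_ge0 score_or_const (twin_fdist true) pi_fdist).
  apply: le_trans (pol_loss_twin_of_EFP p_bd gamma_le pi_fdist (fair t)).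
  by case: (rare_free w) => /=; lra.
rewrite (learner_loss_rounds score_or_const (twin_fdist true) T vL).
apply: le_trans (ler_sum _ (fun t _ => round t)).
by rewrite sumr_const card_ord mulr_natr.
Qed.

End TwinLearner.


Theorem theorem4 (R : realType) :
  exists c : R, 0 < c /\
  forall (alpha : R) (T : nat) (delta : R),
    0 < alpha -> alpha < 1 / 2 ->
    (16 : R) `^ (1 / alpha) <= T%:R ->
    delta <= 24 / 100 ->
    exists (Xh H : finType) (hyp : H -> Xh * bool -> bool),
      (exists i : H, forall x, hyp i x = true) /\
      (exists i : H, forall x, hyp i x = false) /\
      forall L : Learner R Xh H,
        valid_learner L ->
        EFP_delta hyp L T (T%:R `^ (- alpha)) delta ->
        exists D : {ffun Ex Xh -> R},
          is_fdist D /\ efp_nondegenerate D /\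
          exists pistar : {ffun H -> R},
            is_fdist pistar /\ EFP hyp D 0 pistar /\
            c * T%:R `^ (2 * alpha) <=
              learner_loss hyp D L T - T%:R * pol_loss hyp D pistar.
Proof.
exists (1 / 4); split=> [|alpha T delta alpha_gt0 alpha_lt T_ge delta_le]; first lra.
have T_gt0 : 0 < T%:R :> R by apply: lt_le_trans T_ge; apply: powR_gt0.
have T_ge1 : 1 <= T%:R :> R by rewrite ler1n -(ltr0n R).
have Tpow : T%:R `^ (2 * alpha) <= T%:R :> R by apply: ler1_powR; lra.
pose p : R := 1 / (100 * T%:R).
have p_gt0 : 0 < p by rewrite /p divr_gt0 //; lra.
have Tp : T%:R * p = 1 / 100 by rewrite /p; field; lra.
have p_bd : 0 < p < 1 / 2 by apply/andP; split; nra.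
have Tp_le : T%:R * p <= 1 / 100 by rewrite Tp.
exists bool, (option bool), score_or_const.
split; first by exists (Some true).
split; first by exists (Some false).
move=> L vL fairL; exists (twin_dist p true).
split; first by apply: twin_dist_fdist; case/andP: p_bd => *; lra.
split; first exact: twin_dist_nondegenerate.
exists [ffun i => (i == None)%:R]; split; first exact: dirac_fdist.
split; first by rewrite /EFP DeltaFPR_twin //= mul0r mul0r normr0.
rewrite pol_loss_twin_true !ffunE /= addr0 mul0r mulr0 subr0.
have gamma_le := powRN_horizon alpha_gt0 T_ge.
have := twin_loss_lower_bound p_bd vL Tp_le gamma_le delta_le fairL.
lra.
Qed.
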